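(* Let $\lambda>0$ and let $H_3=\mathbb{R}^3$ with coordinates $(x,y,z)$ carry the Lorentzian metric $g_1=-\frac{1}{\lambda^2}dx^2+dy^2+(x\,dy+dz)^2$, with Levi-Civita connection $\nabla$. Let $e_1=\partial_z$, $e_2=\partial_y-x\partial_z$, $e_3=\lambda\partial_x$, and let $V_3=\lambda\partial_x-\lambda y\partial_z\,(=-\lambda ye_1+e_3)$. Then every $V_3$-magnetic curve $\gamma(t)=(x(t),y(t),z(t))$, i.e. every smooth curve with $\nabla_{\gamma'}\gamma'=V_3\wedge\gamma'$, satisfies the system $y''+x'(z'+xy')=yx'+(z'+xy')$, $\frac{x''}{\lambda}+\lambda y'(z'+xy')=\lambda yy'$, $(z'+xy')'=-y'$.
   Context: $(e_1,e_2,e_3)$ is a $g_1$-orthonormal frame with $e_3$ timelike. For $X=\sum X^ie_i$, $Y=\sum Y^ie_i$ the vector product is defined in this frame by $X\wedge Y=(X^2Y^3-X^3Y^2)e_1+(X^3Y^1-X^1Y^3)e_2+(X^2Y^1-X^1Y^2)e_3$. Primes denote derivatives in $t$. *)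

From Stdlib Require Import Reals Lra.
From Coquelicot Require Import Coquelicot.
Open Scope R_scope.

(* Points and (coordinate) vectors of R^3 are functions nat -> R, using the
   indices 0,1,2 for the coordinates x,y,z. *)
Definition pt3 (x y z : R) : nat -> R :=
  fun i => match i with 0%nat => x | 1%nat => y | _ => z end.

Definition sum3 (f : nat -> R) : R := f 0%nat + f 1%nat + f 2%nat.

Definition upd (p : nat -> R) (i : nat) (s : R) : nat -> R :=
  fun j => if Nat.eqb j i then s else p j.

Definition pd (f : (nat -> R) -> R) (i : nat) (p : nat -> R) : R :=
  Derive (fun s => f (upd p i s)) (p i).

(* The Lorentzian metric g1 = -(1/lam^2) dx^2 + dy^2 + (x dy + dz)^2,
   as its matrix of components in the coordinates (x,y,z). *)
Definition g1 (lam : R) (p : nat -> R) (i j : nat) : R :=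
  match i, j with
  | 0%nat, 0%nat => - / (lam ^ 2)
  | 1%nat, 1%nat => 1 + (p 0%nat) ^ 2
  | 1%nat, 2%nat => p 0%nat
  | 2%nat, 1%nat => p 0%nat
  | 2%nat, 2%nat => 1
  | _, _ => 0
  end.

Definition det3 (m : nat -> nat -> R) : R :=
  m 0%nat 0%nat * (m 1%nat 1%nat * m 2%nat 2%nat - m 1%nat 2%nat * m 2%nat 1%nat)
  - m 0%nat 1%nat * (m 1%nat 0%nat * m 2%nat 2%nat - m 1%nat 2%nat * m 2%nat 0%nat)
  + m 0%nat 2%nat * (m 1%nat 0%nat * m 2%nat 1%nat - m 1%nat 1%nat * m 2%nat 0%nat).

Definition nx (i : nat) : nat := match i with 0%nat => 1%nat | 1%nat => 2%nat | _ => 0%nat end.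
Definition nnx (i : nat) : nat := nx (nx i).

(* (i,j) entry of the inverse: cofactor C_{ji} / det *)
Definition inv3 (m : nat -> nat -> R) (i j : nat) : R :=
  (m (nx j) (nx i) * m (nnx j) (nnx i) - m (nx j) (nnx i) * m (nnx j) (nx i))
  / det3 m.

Definition christoffel (g : (nat -> R) -> nat -> nat -> R)
  (k i j : nat) (p : nat -> R) : R :=
  / 2 * sum3 (fun l => inv3 (g p) k l *
     (pd (fun q => g q j l) i p + pd (fun q => g q i l) j p
      - pd (fun q => g q i j) l p)).

Definition curve (x y z : R -> R) (t : R) : nat -> R := pt3 (x t) (y t) (z t).
Definition vel (x y z : R -> R) (t : R) : nat -> R :=
  pt3 (Derive x t) (Derive y t) (Derive z t).
Definition cov_acc (g : (nat -> R) -> nat -> nat -> R) (x y z : R -> R)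
  (t : R) (k : nat) : R :=
  pt3 (Derive (Derive x) t) (Derive (Derive y) t) (Derive (Derive z) t) k
  + sum3 (fun i => sum3 (fun j =>
      christoffel g k i j (curve x y z t) * vel x y z t i * vel x y z t j)).

(* The frame e_1 = d_z, e_2 = d_y - x d_z, e_3 = lam d_x (frame index 0,1,2
   stands for e_1,e_2,e_3), as coordinate vectors at p. *)
Definition frame (lam : R) (p : nat -> R) (a : nat) : nat -> R :=
  match a with
  | 0%nat => pt3 0 0 1
  | 1%nat => pt3 0 1 (- p 0%nat)
  | _ => pt3 lam 0 0
  end.

Definition frame_comb (lam : R) (p : nat -> R) (c : nat -> R) : nat -> R :=
  fun k => sum3 (fun a => c a * frame lam p a k).

(* Vector product in frame components, exactly as defined in the paper:
   X^Y = (X2Y3-X3Y2) e1 + (X3Y1-X1Y3) e2 + (X2Y1-X1Y2) e3 *)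
Definition wedge (X Y : nat -> R) : nat -> R :=
  pt3 (X 1%nat * Y 2%nat - X 2%nat * Y 1%nat)
      (X 2%nat * Y 0%nat - X 0%nat * Y 2%nat)
      (X 1%nat * Y 0%nat - X 0%nat * Y 1%nat).

Definition V3 (lam : R) (p : nat -> R) : nat -> R :=
  pt3 lam 0 (- lam * p 1%nat).

(* gamma is a V_3-magnetic curve: nabla_{gamma'} gamma' = V_3 ^ gamma',
   where the wedge is computed from the frame components of V_3 and gamma'. *)
Definition magnetic_V3 (lam : R) (x y z : R -> R) : Prop :=
  forall t (a b : nat -> R),
    (forall k, (k < 3)%nat -> V3 lam (curve x y z t) k = frame_comb lam (curve x y z t) a k) ->
    (forall k, (k < 3)%nat -> vel x y z t k = frame_comb lam (curve x y z t) b k) ->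
    forall k, (k < 3)%nat ->
      cov_acc (g1 lam) x y z t k = frame_comb lam (curve x y z t) (wedge a b) k.

Definition smooth (f : R -> R) : Prop := forall n t, ex_derive_n f n t.

(** The metric g1 depends on x alone, so its Christoffel symbols are explicit and
    the covariant acceleration of γ is a polynomial expression in γ, γ', γ''.
    In the frame, V_3 has components (-λy, 0, 1) and γ' has components
    (z' + x y', y', x'/λ), so V_3 ∧ γ' is explicit too.  Equating the x- and
    y-components gives the first two equations; adding x times the second
    equation to the z-component gives (z' + x y')' = -y'. *)
From Stdlib Require Import Reals Lra Lia.
From Coquelicot Require Import Coquelicot.
Open Scope R_scope.

Lemma pd_fun_coord0 (h : R -> R) (i : nat) (p : nat -> R) :
  pd (fun q => h (q 0%nat)) i p =
  match i with 0%nat => Derive h (p 0%nat) | _ => 0 end.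
Proof.
  unfold pd, upd; destruct i as [|i]; simpl; [reflexivity |].
  apply Derive_const.
Qed.

Definition g1_entry (lam : R) (j l : nat) (u : R) : R :=
  match j, l with
  | 0%nat, 0%nat => - / (lam ^ 2)
  | 1%nat, 1%nat => 1 + u ^ 2
  | 1%nat, 2%nat => u
  | 2%nat, 1%nat => u
  | 2%nat, 2%nat => 1
  | _, _ => 0
  end.

Definition g1_entry_deriv (j l : nat) (u : R) : R :=
  match j, l with
  | 1%nat, 1%nat => 2 * u
  | 1%nat, 2%nat => 1
  | 2%nat, 1%nat => 1
  | _, _ => 0
  end.

Lemma Derive_g1_entry (lam : R) (j l : nat) (u : R) :
  Derive (g1_entry lam j l) u = g1_entry_deriv j l u.
Proof.
  apply is_derive_unique; unfold g1_entry, g1_entry_deriv.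
  destruct j as [|[|[|j]]]; destruct l as [|[|[|l]]];
    first [apply is_derive_const | auto_derive; [easy | ring]].
Qed.

Lemma pd_g1 (lam : R) (i j l : nat) (p : nat -> R) :
  pd (fun q => g1 lam q j l) i p =
  match i with 0%nat => g1_entry_deriv j l (p 0%nat) | _ => 0 end.
Proof.
  change (fun q => g1 lam q j l) with (fun q => g1_entry lam j l (q 0%nat)).
  rewrite pd_fun_coord0; destruct i; [apply Derive_g1_entry | reflexivity].
Qed.

(** The frame component of γ' along e_1. *)
Definition vel_e1 (x y z : R -> R) (t : R) : R := Derive z t + x t * Derive y t.

Lemma cov_acc_g1 (lam : R) (x y z : R -> R) (t : R) (k : nat) :
  lam <> 0 -> (k < 3)%nat ->
  cov_acc (g1 lam) x y z t k =
  pt3 (Derive (Derive x) t + lam ^ 2 * Derive y t * vel_e1 x y z t)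
      (Derive (Derive y) t + Derive x t * vel_e1 x y z t)
      (Derive (Derive z) t + Derive x t * Derive y t
         - x t * Derive x t * vel_e1 x y z t) k.
Proof.
  intros Hlam Hk.
  unfold cov_acc, christoffel, sum3; cbv beta; rewrite !pd_g1.
  unfold inv3, det3, g1, g1_entry_deriv, nnx, nx, vel, vel_e1, curve, pt3.
  destruct k as [|[|[|k]]]; simpl; try lia; field;
    (split; [easy | replace (1 + x t * x t - x t * x t) with 1 by ring; lra]).
Qed.

Lemma frame_comb_pt3 (lam : R) (p c : nat -> R) (k : nat) : (k < 3)%nat ->
  frame_comb lam p c k =
  pt3 (lam * c 2%nat) (c 1%nat) (c 0%nat - p 0%nat * c 1%nat) k.
Proof.
  intros Hk; unfold frame_comb, sum3, frame, pt3.
  destruct k as [|[|[|k]]]; simpl; try lia; ring.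
Qed.

Lemma V3_frame_coords (lam : R) (p : nat -> R) (k : nat) : (k < 3)%nat ->
  V3 lam p k = frame_comb lam p (pt3 (- lam * p 1%nat) 0 1) k.
Proof.
  intros Hk; rewrite frame_comb_pt3 by easy; unfold V3, pt3.
  destruct k as [|[|[|k]]]; simpl; try lia; ring.
Qed.

Lemma vel_frame_coords (lam : R) (x y z : R -> R) (t : R) (k : nat) :
  lam <> 0 -> (k < 3)%nat ->
  vel x y z t k = frame_comb lam (curve x y z t)
    (pt3 (vel_e1 x y z t) (Derive y t) (Derive x t / lam)) k.
Proof.
  intros Hlam Hk; rewrite frame_comb_pt3 by easy; unfold vel, vel_e1, curve, pt3.
  destruct k as [|[|[|k]]]; simpl; try lia; field; easy.
Qed.

Lemma magnetic_V3_cov_acc (lam : R) (x y z : R -> R) (t : R) (k : nat) :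
  lam <> 0 -> magnetic_V3 lam x y z -> (k < 3)%nat ->
  cov_acc (g1 lam) x y z t k =
  pt3 (lam ^ 2 * y t * Derive y t)
      (vel_e1 x y z t + y t * Derive x t)
      (- Derive y t - x t * (vel_e1 x y z t + y t * Derive x t)) k.
Proof.
  intros Hlam Hmag Hk.
  rewrite (Hmag t _ _ (V3_frame_coords lam _)
             (fun k => vel_frame_coords lam x y z t k Hlam)) by easy.
  rewrite frame_comb_pt3 by easy; unfold wedge, curve, pt3.
  destruct k as [|[|[|k]]]; simpl; try lia; field; easy.
Qed.

Lemma Derive_vel_e1 (x y z : R -> R) (t : R) :
  smooth x -> smooth y -> smooth z ->
  Derive (vel_e1 x y z) t =
  Derive (Derive z) t + Derive x t * Derive y t + x t * Derive (Derive y) t.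
Proof.
  intros Sx Sy Sz; unfold vel_e1.
  rewrite Derive_plus, Derive_mult; [ring | exact (Sx 1%nat t) | exact (Sy 2%nat t)
    | exact (Sz 2%nat t) | apply ex_derive_mult; [exact (Sx 1%nat t) | exact (Sy 2%nat t)]].
Qed.

Lemma magnetic_V3_equations (lam : R) (x y z : R -> R) (t : R) :
  lam <> 0 -> magnetic_V3 lam x y z ->
  let w := vel_e1 x y z t in
  Derive (Derive x) t + lam ^ 2 * Derive y t * w = lam ^ 2 * y t * Derive y t
  /\ Derive (Derive y) t + Derive x t * w = w + y t * Derive x t
  /\ Derive (Derive z) t + Derive x t * Derive y t - x t * Derive x t * w
     = - Derive y t - x t * (w + y t * Derive x t).
Proof.
  intros Hlam Hmag w.
  pose (component k (Hk : (k < 3)%nat) :=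
    eq_trans (eq_sym (cov_acc_g1 lam x y z t k Hlam Hk))
             (magnetic_V3_cov_acc lam x y z t k Hlam Hmag Hk)).
  exact (conj (component 0%nat ltac:(lia))
           (conj (component 1%nat ltac:(lia)) (component 2%nat ltac:(lia)))).
Qed.

Theorem mainTheorem3 (lam : R) (x y z : R -> R) :
  0 < lam -> smooth x -> smooth y -> smooth z ->
  magnetic_V3 lam x y z ->
  forall t : R,
    Derive (Derive y) t + Derive x t * (Derive z t + x t * Derive y t)
      = y t * Derive x t + (Derive z t + x t * Derive y t)
    /\ Derive (Derive x) t / lam + lam * Derive y t * (Derive z t + x t * Derive y t)
      = lam * y t * Derive y t
    /\ Derive (fun s => Derive z s + x s * Derive y s) t = - Derive y t.
Proof.
  intros Hlam Sx Sy Sz Hmag t.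
  assert (Hlam0 : lam <> 0) by lra.
  destruct (magnetic_V3_equations lam x y z t Hlam0 Hmag) as [Ex [Ey Ez]].
  change (fun s => Derive z s + x s * Derive y s) with (vel_e1 x y z).
  rewrite Derive_vel_e1 by easy; unfold vel_e1 in *.
  split; [lra | split].
  - apply (Rmult_eq_reg_l lam); [| easy].
    field_simplify; [lra | easy].
  - nra.
Qed.
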